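(* Let $S$ be a finite state set, $A$ a finite action-profile set and $q$ a transition kernel such that for every pure Markov strategy profile $\mathbf a=(a_s)_s\in A^{|S|}$ the matrix $(q(t\mid s,a_s))_{s,t}$ is irreducible; let $\pi(\mathbf a)=(\pi_s(\mathbf a))_{s\in S}$ be its unique invariant distribution. Let $\tilde\alpha:S\to\mathbb R^{|A|}$ satisfy $\sum_{a\in A}\tilde\alpha_s(a)=1$ for each $s$, and let $\tilde\beta\in\mathbb R^{|S|}$ satisfy $\sum_{s\in S}\sum_{a\in A}\tilde\beta_s\tilde\alpha_s(a)q(t\mid s,a)=\tilde\beta_t$ for every $t\in S$. Then there exists $k:A^{|S|}\to\mathbb R$ such that $$\tilde\beta_s\tilde\alpha_s(a)=\sum_{\mathbf a=(a_{s'})_{s'}\in A^{|S|}:\,a_s=a}k(\mathbf a)\,\pi_s(\mathbf a)\quad\text{for all } s\in S,\ a\in A.$$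
   Context: The entries $\tilde\alpha_s(a)$ may be negative. *)

From HB Require Import structures.
From mathcomp Require Import all_boot all_order all_algebra.
Set Implicit Arguments. Unset Strict Implicit. Unset Printing Implicit Defensive.
Import Order.TTheory GRing.Theory Num.Theory.
Local Open Scope ring_scope.

Definition transition_kernel (R : realFieldType) (S A : finType)
  (q : S -> A -> S -> R) : Prop :=
  (forall s a t, 0 <= q s a t) /\ (forall s a, \sum_(t : S) q s a t = 1).

Definition profile_matrix (R : realFieldType) (S A : finType)
  (q : S -> A -> S -> R) (p : {ffun S -> A}) : S -> S -> R :=
  fun s t => q s (p s) t.

(* Irreducible nonnegative matrix: the directed graph s -> t iff P s t > 0
   is strongly connected (equivalently, for all s t there is n with
   (P^n)_{s t} > 0). *)
Definition irreducible (R : realFieldType) (S : finType) (P : S -> S -> R) : Prop :=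
  forall s t : S, connect (fun x y : S => 0 < P x y) s t.

Definition invariant_distribution (R : realFieldType) (S : finType)
  (P : S -> S -> R) (mu : S -> R) : Prop :=
  [/\ forall s, 0 <= mu s,
      \sum_(s : S) mu s = 1
    & forall t, \sum_(s : S) mu s * P s t = mu t].

From HB Require Import structures.
From mathcomp Require Import all_boot all_order all_algebra.
Set Implicit Arguments. Unset Strict Implicit. Unset Printing Implicit Defensive.
Import Order.TTheory GRing.Theory Num.Theory.
Local Open Scope ring_scope.

(* Every balanced state-action measure is a signed combination of the
   stationary occupation measures of pure Markov profiles.

   Call w : S -> A -> R balanced when the flow into each state t equals the
   mass sitting at t:  sum_s sum_a w(s,a) q(t|s,a) = sum_a w(t,a).  The
   hypothesis on (alpha, beta) says exactly that beta_s alpha_s(a) is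
   balanced, and the occupation measure occ_p(s,a) = [p s = a] pi_s(p) of
   every profile p is balanced because pi(p) is invariant.  Balance is
   preserved by linear combinations.

   Fix a base profile p0 and, for each off-graph pair (s,a) (a <> p0 s), the
   one-state deviation dev(s,a) of p0 playing a at s.  Among the measures
   occ_p0 and occ_dev(s,a), only occ_dev(s,a) charges (s,a) off the graph of
   p0, with positive weight pi_s(dev(s,a)) (irreducibility).  Subtracting the
   suitable multiples of these leaves a balanced measure carried by the
   graph of p0, i.e. an invariant vector of the irreducible chain of p0,
   which by uniqueness is a multiple of occ_p0. *)

Section IrreducibleInvariant.
Variables (R : realFieldType) (S : finType) (P : S -> S -> R).
Hypothesis P_ge0 : forall s t, 0 <= P s t.

Lemma invariant_zero_backwards {w : S -> R} {x y : S} :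
  (forall s, 0 <= w s) -> (forall t, \sum_s w s * P s t = w t) ->
  connect (fun a b : S => 0 < P a b) x y -> w y = 0 -> w x = 0.
Proof.
move=> w_ge0 w_inv /connectP[ps]; elim: ps x => [|z ps IH] x /=.
  by move=> _ ->.
move=> /andP[Pxz z_ps] y_last wy0.
have wz0 := IH z z_ps y_last wy0.
have : \sum_s w s * P s z = 0 by rewrite w_inv.
move/psumr_eq0P/(_ x isT) => /(_ (fun s _ => mulr_ge0 (w_ge0 s) (P_ge0 s z))).
by move/eqP; rewrite mulf_eq0 (gt_eqF Pxz) orbF => /eqP.
Qed.

Hypothesis P_irr : irreducible P.

Lemma invariant_distribution_pos {mu : S -> R} :
  invariant_distribution P mu -> forall t, 0 < mu t.
Proof.
case=> mu_ge0 mu_sum1 mu_inv t; rewrite lt_def mu_ge0 andbT.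
apply/eqP => mut0.
have mu0 s : mu s = 0 := invariant_zero_backwards mu_ge0 mu_inv (P_irr s t) mut0.
by move: mu_sum1; rewrite big1 // => /eqP; rewrite eq_sym oner_eq0.
Qed.

(* Every (signed) invariant vector is a multiple of the invariant
   distribution: subtracting the largest admissible multiple leaves a
   nonnegative invariant vector with a zero, hence identically zero. *)
Lemma invariant_vector_multiple {mu z : S -> R} :
  invariant_distribution P mu -> (forall t, \sum_s z s * P s t = z t) ->
  exists c, forall s, z s = c * mu s.
Proof.
move=> mu_distr z_inv.
have mu_pos := invariant_distribution_pos mu_distr.
case: mu_distr => _ _ mu_inv.
case: (pickP (fun _ : S => true)) => [s0 _ | S0]; last first.
  by exists 0 => s; have := S0 s.
have [sm _ sm_min] := @arg_minP _ _ _ s0 xpredT (fun s => z s / mu s) isT.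
set c := z sm / mu sm; exists c.
pose w s := z s - c * mu s.
have w_ge0 s : 0 <= w s by rewrite subr_ge0 -ler_pdivlMr ?mu_pos ?sm_min.
have w_inv t : \sum_s w s * P s t = w t.
  under eq_bigr do rewrite mulrBl -mulrA.
  by rewrite sumrB -mulr_sumr z_inv mu_inv.
have wsm0 : w sm = 0 by rewrite /w /c divfK ?subrr // gt_eqF ?mu_pos.
move=> s; apply/eqP; rewrite -subr_eq0; apply/eqP.
exact: invariant_zero_backwards w_ge0 w_inv (P_irr s sm) wsm0.
Qed.

End IrreducibleInvariant.

Lemma sum_delta (R : pzSemiRingType) (T : finType) (p0 : T) (F : T -> R) :
  \sum_p (p == p0)%:R * F p = F p0.
Proof.
rewrite (bigD1 p0) //= eqxx mul1r big1 ?addr0 // => p /negbTE ->.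
exact: mul0r.
Qed.

Lemma sum_delta_comb (R : pzSemiRingType) (I T : finType) (c : I -> R) (f : I -> T)
    (F : T -> R) :
  \sum_p (\sum_i c i * (p == f i)%:R) * F p = \sum_i c i * F (f i).
Proof.
under eq_bigr do rewrite mulr_suml.
rewrite exchange_big; apply: eq_bigr => i _.
by under eq_bigr do rewrite -mulrA; rewrite -mulr_sumr sum_delta.
Qed.

Section Balance.
Variables (R : realFieldType) (S A : finType) (q : S -> A -> S -> R).

Definition balanced (w : S -> A -> R) : Prop :=
  forall t, \sum_s \sum_a w s a * q s a t = \sum_a w t a.

Lemma balanced_lincomb (I : finType) (x : S -> A -> R) (c : I -> R)
    (G : I -> S -> A -> R) :
  balanced x -> (forall i, balanced (G i)) ->
  balanced (fun s a => x s a - \sum_i c i * G i s a).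
Proof.
move=> x_bal G_bal t.
under eq_bigr do under eq_bigr do rewrite mulrBl mulr_suml.
under eq_bigr do rewrite sumrB [X in _ - X]exchange_big.
rewrite sumrB [X in _ - X]exchange_big sumrB x_bal; congr (_ - _).
rewrite [RHS]exchange_big; apply: eq_bigr => i _.
rewrite -mulr_sumr -G_bal mulr_sumr; apply: eq_bigr => s _.
by rewrite mulr_sumr; apply: eq_bigr => a _; rewrite mulrA.
Qed.

Definition occ (mu : S -> R) (p : {ffun S -> A}) (s : S) (a : A) : R :=
  if p s == a then mu s else 0.

Lemma sum_occ (mu : S -> R) p s (F : A -> R) :
  \sum_a occ mu p s a * F a = mu s * F (p s).
Proof.
rewrite (bigD1 (p s)) //= /occ eqxx big1 ?addr0 // => a.
by rewrite eq_sym => /negbTE ->; rewrite mul0r.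
Qed.

Lemma occ_mass (mu : S -> R) p s : \sum_a occ mu p s a = mu s.
Proof.
rewrite (bigD1 (p s)) //= /occ eqxx big1 ?addr0 // => a.
by rewrite eq_sym => /negbTE ->.
Qed.

Lemma occ_balanced (mu : S -> R) p :
  (forall t, \sum_s mu s * profile_matrix q p s t = mu t) -> balanced (occ mu p).
Proof.
move=> mu_inv t; under eq_bigr do rewrite sum_occ.
by rewrite occ_mass mu_inv.
Qed.

Lemma balanced_on_graph (w : S -> A -> R) (p : {ffun S -> A}) :
  balanced w -> (forall s a, a != p s -> w s a = 0) ->
  forall t, \sum_s w s (p s) * profile_matrix q p s t = w t (p t).
Proof.
move=> w_bal w_off t; have := w_bal t.
have on_graph s (F : A -> R) : \sum_a w s a * F a = w s (p s) * F (p s).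
  by rewrite (bigD1 (p s)) //= big1 ?addr0 // => a /w_off ->; rewrite mul0r.
have mass : \sum_a w t a = w t (p t).
  by rewrite (bigD1 (p t)) //= big1 ?addr0 // => a /w_off.
by under eq_bigr => s _ do rewrite (on_graph s (fun a => q s a t)); rewrite mass.
Qed.

End Balance.

Section Decomposition.
Variables (R : realFieldType) (S A : finType) (q : S -> A -> S -> R).
Variable pi : {ffun S -> A} -> S -> R.
Hypothesis q_ge0 : forall s a t, 0 <= q s a t.
Hypothesis q_irr : forall p, irreducible (profile_matrix q p).
Hypothesis pi_inv : forall p, invariant_distribution (profile_matrix q p) (pi p).
Variable a0 : A.

Let P_ge0 p s t : 0 <= profile_matrix q p s t := q_ge0 s (p s) t.

Let pi_pos p s : 0 < pi p s :=
  invariant_distribution_pos (P_ge0 p) (q_irr p) (pi_inv p) s.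

Let pi_occ_balanced p : balanced q (occ (pi p) p).
Proof. by apply: occ_balanced; case: (pi_inv p). Qed.

Definition base_profile : {ffun S -> A} := [ffun => a0].

Definition deviation (i : S * A) : {ffun S -> A} :=
  [ffun s => if s == i.1 then i.2 else a0].

Lemma deviation_occ_off_graph i s a : a != a0 ->
  occ (pi (deviation i)) (deviation i) s a =
  if i == (s, a) then pi (deviation i) s else 0.
Proof.
case: i => s' a' a_off; rewrite /occ ffunE /= xpair_eqE.
case: (eqVneq s s') => [->|s_ne] //=.
by rewrite eq_sym (negbTE a_off).
Qed.

Variable x : S -> A -> R.
Hypothesis x_bal : balanced q x.

(* Weight of the deviation i needed to match x at the off-graph pair i
   (zero when i lies on the base graph). *)
Definition deviation_weight (i : S * A) : R :=
  (i.2 != a0)%:R * x i.1 i.2 / pi (deviation i) i.1.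

Definition residual (s : S) (a : A) : R :=
  x s a - \sum_i deviation_weight i * occ (pi (deviation i)) (deviation i) s a.

Lemma residual_off_graph s a : a != base_profile s -> residual s a = 0.
Proof.
rewrite ffunE => a_off; rewrite /residual.
under eq_bigr => i _ do
  rewrite deviation_occ_off_graph // (fun_if (fun y => deviation_weight i * y)) mulr0.
rewrite -big_mkcond big_pred1_eq /deviation_weight /= a_off mul1r.
by rewrite divfK ?subrr // gt_eqF ?pi_pos.
Qed.

(* The residual is balanced and on the base graph, hence a multiple of the
   base occupation measure. *)
Lemma residual_multiple :
  exists c, forall s a, residual s a = c * occ (pi base_profile) base_profile s a.
Proof.
have res_bal : balanced q residual.
  by apply: balanced_lincomb x_bal _ => i; apply: pi_occ_balanced.
have [c hc] := invariant_vector_multiple (P_ge0 base_profile)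
  (q_irr base_profile) (pi_inv base_profile)
  (balanced_on_graph res_bal residual_off_graph).
exists c => s a; rewrite /occ; case: eqP => [<-|/eqP a_off]; first exact: hc.
by rewrite mulr0 residual_off_graph // eq_sym.
Qed.

Lemma balanced_decomposition :
  exists k : {ffun S -> A} -> R,
    forall s a, x s a = \sum_p k p * occ (pi p) p s a.
Proof.
have [c hc] := residual_multiple.
exists (fun p => c * (p == base_profile)%:R +
  \sum_i deviation_weight i * (p == deviation i)%:R) => s a.
under eq_bigr do rewrite mulrDl -mulrA.
rewrite big_split /= -mulr_sumr sum_delta sum_delta_comb -hc /residual.
by rewrite subrK.
Qed.

End Decomposition.

Theorem mainTheorem4 (R : realFieldType) (S A : finType)
  (q : S -> A -> S -> R) (hq : transition_kernel q)
  (hirr : forall p : {ffun S -> A}, irreducible (profile_matrix q p))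
  (pi : {ffun S -> A} -> S -> R)
  (hpi : forall p : {ffun S -> A}, invariant_distribution (profile_matrix q p) (pi p))
  (alpha : S -> A -> R) (halpha : forall s, \sum_(a : A) alpha s a = 1)
  (beta : S -> R)
  (hbeta : forall t : S,
      \sum_(s : S) \sum_(a : A) beta s * alpha s a * q s a t = beta t) :
  exists k : {ffun S -> A} -> R,
    forall (s : S) (a : A),
      beta s * alpha s a = \sum_(p : {ffun S -> A} | p s == a) k p * pi p s.
Proof.
case: (pickP (fun _ : A => true)) => [a0 _ | A0]; last first.
  by exists (fun _ => 0) => s a; have := A0 a.
have x_bal : balanced q (fun s a => beta s * alpha s a).
  by move=> t; rewrite hbeta -mulr_sumr halpha mulr1.
have [k hk] := balanced_decomposition hq.1 hirr hpi a0 x_bal.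
exists k => s a; rewrite hk [RHS]big_mkcond /=.
by apply: eq_bigr => p _; rewrite /occ (fun_if (fun y => k p * y)) mulr0.
Qed.
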